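(* Let $\mathcal L$ be an algebraic system, $\mathbf{STop}\mathcal{L}$ the category of semitopological $\mathcal L$-structures, and let $X$ be (the domain of) a structure in $\mathbf{STop}\mathcal{L}$. Then $\mathrm{r}_{\mathcal C_1}X=X/R_{\mathcal C_1}$, where $R_{\mathcal C_1}$ is the intersection of all equivalence relations on $X$ whose equivalence classes are closed in $X$; furthermore, $R_{\mathcal C_1}$ is an $\mathcal L$-congruence on $X$.
   Context: $\mathcal C_1$ is the epireflective subcategory of $\mathbf{Top}$ consisting of $T_1$ spaces and $\mathrm{r}_{\mathcal C_1}X$ is the $T_1$-reflection of $X$ (the universal $T_1$ quotient: every continuous map from $X$ into a $T_1$ space factors uniquely through the continuous surjection $X\to\mathrm{r}_{\mathcal C_1}X$). An algebraic system $\mathcal L$ consists of constant symbols, function symbols of finite arity $\ge1$ and equations; a semitopological $\mathcal L$-structure is an $\mathcal L$-structure on a topological space with all operations separately continuous. An $\mathcal L$-congruence is an equivalence relation $R$ such that whenever $(x_i,y_i)\in R$ for $i=1,\dots,n$ and $\Phi$ is an $n$-ary operation, $(\Phi(x_1,\dots,x_n),\Phi(y_1,\dots,y_n))\in R$. *)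

From HB Require Import structures.
From mathcomp Require Import all_boot all_order all_algebra.
From mathcomp Require Import all_classical all_reals all_analysis.
From mathcomp Require Import generic_quotient.

Set Implicit Arguments.
Unset Strict Implicit.
Unset Printing Implicit Defensive.

Local Open Scope classical_set_scope.

(* An algebraic system: operation symbols with arities (constant symbols are
   the symbols of arity 0, function symbols those of arity >= 1) together with
   a set of equations between terms. *)
Record signature := Signature { sym : Type; arity : sym -> nat }.

Inductive term (S : signature) : Type :=
| Var : nat -> term S
| App (f : sym S) : ('I_(arity f) -> term S) -> term S.

Record algebraic_system := AlgSystem {
  sig_of :> signature;
  equations : set (term sig_of * term sig_of) }.

Definition operations (S : signature) (X : Type) :=
  forall f : sym S, ('I_(arity f) -> X) -> X.

Fixpoint eval_term (S : signature) (X : Type) (ops : operations S X)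
  (v : nat -> X) (t : term S) : X :=
  match t with
  | Var n => v n
  | App f args => ops f (fun i => eval_term ops v (args i))
  end.

Definition is_L_structure (L : algebraic_system) (X : Type)
  (ops : operations L X) : Prop :=
  forall e, @equations L e -> forall v : nat -> X,
    eval_term ops v e.1 = eval_term ops v e.2.

Definition separately_continuous (S : signature) (X : topologicalType)
  (ops : operations S X) : Prop :=
  forall (f : sym S) (a : 'I_(arity f) -> X) (i : 'I_(arity f)),
    continuous (fun x : X => ops f (fun j => if j == i then x else a j)).

Definition semitopological_L_structure (L : algebraic_system)
  (X : topologicalType) (ops : operations L X) : Prop :=
  is_L_structure ops /\ separately_continuous ops.

Definition L_congruence (S : signature) (X : Type) (ops : operations S X)
  (R : X -> X -> Prop) : Prop :=
  [/\ (forall x, R x x), (forall x y, R x y -> R y x),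
      (forall x y z, R x y -> R y z -> R x z) &
      forall (f : sym S) (a b : 'I_(arity f) -> X),
        (forall i, R (a i) (b i)) -> R (ops f a) (ops f b)].

Definition is_T1_reflection (X Y : topologicalType) (q : X -> Y) : Prop :=
  [/\ continuous q, (forall y : Y, exists x, q x = y), accessible_space Y &
      forall (Z : topologicalType) (f : X -> Z), accessible_space Z ->
        continuous f ->
        exists g : Y -> Z, [/\ continuous g, f = g \o q &
          forall g' : Y -> Z, continuous g' -> f = g' \o q -> g' = g]].

Definition closed_classes_equiv (X : topologicalType) (E : X -> X -> Prop) :=
  [/\ (forall x, E x x), (forall x y, E x y -> E y x),
      (forall x y z, E x y -> E y z -> E x z) &
      forall x, closed [set y | E x y]].

Definition R_C1 (X : topologicalType) (x y : X) : Prop :=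
  forall E : X -> X -> Prop, closed_classes_equiv E -> E x y.

Definition R_C1b (X : topologicalType) : rel X := fun x y => `[< R_C1 x y >].

Lemma R_C1_refl (X : topologicalType) (x : X) : R_C1 x x.
Proof. by move=> E; case=> r _ _ _; exact: r. Qed.

Lemma R_C1_sym (X : topologicalType) (x y : X) : R_C1 x y -> R_C1 y x.
Proof. by move=> H E hE; case: (hE) => _ s _ _; exact: s _ _ (H E hE). Qed.

Lemma R_C1_trans (X : topologicalType) (x y z : X) :
  R_C1 x y -> R_C1 y z -> R_C1 x z.
Proof.
move=> H1 H2 E hE; case: (hE) => _ _ t _; exact: (t _ _ _ (H1 E hE) (H2 E hE)).
Qed.

Lemma R_C1b_refl (X : topologicalType) : reflexive (@R_C1b X).
Proof. by move=> x; apply/asboolP; exact: R_C1_refl. Qed.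

Lemma R_C1b_sym (X : topologicalType) : symmetric (@R_C1b X).
Proof.
move=> x y; apply/idP/idP => /asboolP H; apply/asboolP; exact: R_C1_sym.
Qed.

Lemma R_C1b_trans (X : topologicalType) : transitive (@R_C1b X).
Proof.
move=> y x z /asboolP H1 /asboolP H2; apply/asboolP; exact: R_C1_trans H2.
Qed.

Definition R_C1_equiv (X : topologicalType) : equiv_rel X :=
  EquivRel (@R_C1b X) (@R_C1b_refl X) (@R_C1b_sym X) (@R_C1b_trans X).

Definition X_mod_RC1 (X : topologicalType) :=
  quotient_topology {eq_quot (R_C1_equiv X)}%qT.

Definition pi_RC1 (X : topologicalType) : X -> X_mod_RC1 X :=
  fun x => (\pi_(X_mod_RC1 X) x)%qT.

From HB Require Import structures.
From mathcomp Require Import all_boot all_order all_algebra.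
From mathcomp Require Import all_classical all_reals all_analysis.
From mathcomp Require Import generic_quotient.

(* Since R_C1 is an intersection of equivalences with closed classes, its own
   classes are closed, so points of X / R_C1 are closed and the quotient is T1.
   Conversely the fibres of a continuous map into a T1 space form such an
   equivalence, so the map is constant on R_C1-classes and factors through the
   quotient.  Continuous maps pull back equivalences with closed classes, hence
   preserve R_C1; applied to the separately continuous operations, R_C1 is
   respected in each argument, and changing the arguments one at a time shows
   it is a congruence. *)

Local Open Scope classical_set_scope.

Section closed_classes.
Context {X : topologicalType}.

Lemma closed_classes_equiv_preimage {Z : topologicalType} {g : X -> Z}
    {E : Z -> Z -> Prop} :
  continuous g -> closed_classes_equiv E ->
  closed_classes_equiv (fun u v => E (g u) (g v)).
Proof.
move=> cg [Erefl Esym Etrans Eclosed]; split=> [u|u v|u v w|u].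
- exact: Erefl.
- exact: Esym.
- exact: Etrans.
- by apply: (preimage_closed (fun v _ => cg v)); exact: Eclosed.
Qed.

Lemma closed_classes_equiv_eq : accessible_space X ->
  closed_classes_equiv (@eq X).
Proof.
move=> aX; split=> [//|u v|u v w|u]; [exact: esym|exact: etrans|].
have -> : [set v | u = v] = [set u] by apply/seteqP; split=> v /=.
exact: accessible_closed_set1.
Qed.

Lemma closed_R_C1_class (x : X) : closed [set z | R_C1 x z].
Proof.
rewrite (_ : [set z | R_C1 x z] =
  \bigcap_(E in @closed_classes_equiv X) [set z | E x z]).
  by apply: closed_bigI => E [_ _ _]; exact.
by apply/seteqP; split=> z xz E /xz.
Qed.

End closed_classes.

Lemma continuous_R_C1 {X Z : topologicalType} {g : X -> Z} {x y : X} :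
  continuous g -> R_C1 x y -> R_C1 (g x) (g y).
Proof. by move=> cg xy E /(closed_classes_equiv_preimage cg); exact: xy. Qed.

Lemma continuous_accessible_R_C1_eq {X Z : topologicalType} {f : X -> Z}
    {x y : X} :
  accessible_space Z -> continuous f -> R_C1 x y -> f x = f y.
Proof.
move=> aZ cf /(continuous_R_C1 cf); apply; exact: closed_classes_equiv_eq.
Qed.

Section T1_reflection.
Variable X : topologicalType.

Lemma pi_RC1_eq (x y : X) : pi_RC1 x = pi_RC1 y <-> R_C1 x y.
Proof.
have /(_ x y) := eqquotP ({eq_quot (R_C1_equiv X)})%qT.
by move=> xyP; split=> [/xyP/asboolP|/asboolP/xyP].
Qed.

Lemma pi_RC1_repr (y : X_mod_RC1 X) : pi_RC1 (repr y) = y.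
Proof. exact: reprK. Qed.

Lemma closed_set1_X_mod_RC1 (y : X_mod_RC1 X) : closed [set y].
Proof.
rewrite -[[set y]]setCK; apply: open_closedC.
rewrite /open /= /quotient_open -preimage_setC openC.
rewrite (_ : _ @^-1` _ = [set z | R_C1 (repr y) z]).
  exact: closed_R_C1_class.
apply/seteqP; split=> z /=.
  by move=> zy; apply: R_C1_sym; apply/pi_RC1_eq; rewrite pi_RC1_repr.
by move=> /R_C1_sym /pi_RC1_eq; rewrite pi_RC1_repr.
Qed.

Lemma accessible_X_mod_RC1 : accessible_space (X_mod_RC1 X).
Proof.
move=> y z yz; exists (~` [set z]); rewrite !inE /=; split=> //.
- exact/closed_openC/closed_set1_X_mod_RC1.
- by move/eqP: yz.
Qed.

Lemma pi_RC1_universal (Z : topologicalType) (f : X -> Z) :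
  accessible_space Z -> continuous f ->
  exists g : X_mod_RC1 X -> Z, [/\ continuous g, f = g \o @pi_RC1 X &
    forall g', continuous g' -> f = g' \o @pi_RC1 X -> g' = g].
Proof.
move=> aZ cf.
have f_pi x y : pi_RC1 x = pi_RC1 y -> f x = f y.
  by move/pi_RC1_eq; exact: continuous_accessible_R_C1_eq.
exists (f \o repr); split.
- by apply: repr_comp_continuous => // a b /eqP/f_pi ->.
- by apply/funext => x; apply: f_pi; rewrite pi_RC1_repr.
- move=> g' _ f_g'; apply/funext => y /=.
  by rewrite -{1}(pi_RC1_repr y) -[g' _]/((g' \o @pi_RC1 X) _) -f_g'.
Qed.

Lemma pi_RC1_T1_reflection : is_T1_reflection (@pi_RC1 X).
Proof.
split.
- exact: pi_continuous.
- by move=> y; exists (repr y); exact: pi_RC1_repr.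
- exact: accessible_X_mod_RC1.
- exact: pi_RC1_universal.
Qed.

End T1_reflection.

Section congruence.
Context {S : signature} {X : Type} (ops : operations S X).
Variable R : X -> X -> Prop.

Definition separately_compatible :=
  forall (f : sym S) (a : 'I_(arity f) -> X) (i : 'I_(arity f)) (x y : X),
    R x y -> R (ops f (fun j => if j == i then x else a j))
               (ops f (fun j => if j == i then y else a j)).

Hypotheses (R_refl : forall x, R x x)
  (R_trans : forall x y z, R x y -> R y z -> R x z).

Definition replace_prefix {n} (a b : 'I_n -> X) (k : nat) : 'I_n -> X :=
  fun j => if (j < k)%N then b j else a j.

Lemma separately_compatible_replace_prefix (f : sym S)
    (a b : 'I_(arity f) -> X) :
  separately_compatible -> (forall i, R (a i) (b i)) ->
  forall k, R (ops f a) (ops f (replace_prefix a b k)).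
Proof.
move=> compat ab; elim=> [|k IH].
  by rewrite (_ : replace_prefix a b 0 = a); [exact: R_refl|exact/funext].
apply: (R_trans _ _ _ IH).
have [k_lt|k_ge] := ltnP k (arity f); last first.
  rewrite (_ : replace_prefix a b k.+1 = replace_prefix a b k) //.
  apply/funext => j; rewrite /replace_prefix ltnS.
  by rewrite leq_eqVlt (leq_trans (ltn_ord j) k_ge) orbT.
pose i := Ordinal k_lt.
have -> : replace_prefix a b k =
    fun j => if j == i then a i else replace_prefix a b k j.
  by apply/funext => j; case: eqP => // ->; rewrite /replace_prefix ltnn.
have -> : replace_prefix a b k.+1 =
    fun j => if j == i then b i else replace_prefix a b k j.
  apply/funext => j; rewrite /replace_prefix ltnS leq_eqVlt.
  have [->|ji] := eqVneq j i; first by rewrite /= !eqxx.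
  by rewrite (negbTE (ji : val j != k)).
exact: compat.
Qed.

Lemma separately_compatible_L_congruence :
  (forall x y, R x y -> R y x) -> separately_compatible -> L_congruence ops R.
Proof.
move=> R_sym compat; split=> // f a b ab.
rewrite (_ : b = replace_prefix a b (arity f)).
  exact: separately_compatible_replace_prefix.
by apply/funext => j; rewrite /replace_prefix ltn_ord.
Qed.

End congruence.

Lemma separately_continuous_compatible_R_C1 (S : signature)
    (X : topologicalType) (ops : operations S X) :
  separately_continuous ops -> separately_compatible ops (@R_C1 X).
Proof. by move=> sc f a i x y xy; exact: (continuous_R_C1 (sc f a i) xy). Qed.

Theorem corollary3p12 (L : algebraic_system) (X : topologicalType)
  (ops : operations L X) :
  semitopological_L_structure ops ->
  is_T1_reflection (@pi_RC1 X) /\ L_congruence ops (@R_C1 X).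
Proof.
move=> [_ sc]; split; first exact: pi_RC1_T1_reflection.
apply: separately_compatible_L_congruence.
- exact: R_C1_refl.
- exact: R_C1_trans.
- exact: R_C1_sym.
- exact: separately_continuous_compatible_R_C1.
Qed.
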